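(* In the standing setup, let $B=\alpha I+\beta A+\gamma A^2$ ($\alpha,\beta,\gamma\in\mathbb R$) satisfy $B^2=I$, and let $g(x)=B^{\rm T}f_0(x)$ be the associated vector field. Then for all $x\in\mathbb R^6$: $g'(x)g(x)=f_0'(x)f_0(x)$ and $(g'(x))^2=(f_0'(x))^2$.
   Context: Standing setup: $J=\begin{pmatrix}0&I_3\\-I_3&0\end{pmatrix}$ ($6\times6$). $A$ is a fixed real $6\times 6$ skew-Hamiltonian matrix, i.e. $A^{\rm T}J=JA$. $\nabla H$ denotes the gradient and $\nabla^2H$ the Hesse matrix. $H_0$ is a homogeneous cubic polynomial on $\mathbb R^6$ with $A\nabla^2H_0(x)=\nabla^2H_0(x)A^{\rm T}$ for all $x$, and $H_1,H_2$ are homogeneous cubic polynomials with $\nabla H_1=A\nabla H_0$, $\nabla H_2=A\nabla H_1$. Set $f_i=J\nabla H_i$; primes denote Jacobi matrices. Associated vector field: if $B=\alpha I+\beta A+\gamma A^2$ satisfies $B^2=I$, then $g(x)=JB\nabla H_0(x)=B^{\rm T}f_0(x)$ is called associated to $f_0$; it equals $J\nabla K$ with $K=\alpha H_0+\beta H_1+\gamma H_2$. *)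

(* Polynomials on R^6 are represented by coefficient tensors;
   gradients, Hesse and Jacobi matrices are the formal (exact) derivatives. *)
From HB Require Import structures.
From mathcomp Require Import all_boot all_order all_algebra.
Set Implicit Arguments. Unset Strict Implicit. Unset Printing Implicit Defensive.
Import Order.TTheory GRing.Theory Num.Theory.
Local Open Scope ring_scope.

Section Defs.
Variable R : realFieldType.

(* J = [[0, I_3], [-I_3, 0]] *)
Definition Jmat : 'M[R]_6 :=
  \matrix_(i < 6, j < 6)
    (if (i < 3)%N && (nat_of_ord j == i + 3)%N then 1
     else if (3 <= i)%N && (nat_of_ord j + 3 == i)%N then -1 else 0).

Definition skew_hamiltonian (A : 'M[R]_6) : Prop := A^T *m Jmat = Jmat *m A.

Definition cubic := 'I_6 -> 'I_6 -> 'I_6 -> R.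
Definition cubic_eval (c : cubic) (x : 'cV[R]_6) : R :=
  \sum_(i < 6) \sum_(j < 6) \sum_(k < 6) c i j k * x i 0 * x j 0 * x k 0.

Definition qfield := 'I_6 -> 'I_6 -> 'I_6 -> R.
Definition qeval (q : qfield) (x : 'cV[R]_6) : 'cV[R]_6 :=
  \col_(l < 6) \sum_(j < 6) \sum_(k < 6) q l j k * x j 0 * x k 0.
Definition qjac (q : qfield) (x : 'cV[R]_6) : 'M[R]_6 :=
  \matrix_(l < 6, m < 6) \sum_(k < 6) (q l m k + q l k m) * x k 0.
Definition qmap (M : 'M[R]_6) (q : qfield) : qfield :=
  fun l j k => \sum_(i < 6) M l i * q i j k.

(* gradient of a cubic, as a quadratic vector field (formal derivative):
   d/dx_l sum c i j k x_i x_j x_k = sum_{j,k} (c l j k + c j l k + c j k l) x_j x_k *)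
Definition grad_field (c : cubic) : qfield :=
  fun l j k => c l j k + c j l k + c j k l.
Definition grad (c : cubic) (x : 'cV[R]_6) : 'cV[R]_6 := qeval (grad_field c) x.
Definition hess (c : cubic) (x : 'cV[R]_6) : 'M[R]_6 := qjac (grad_field c) x.

Definition ham_field (c : cubic) : qfield := qmap Jmat (grad_field c).

End Defs.

(* Since [B] is a quadratic polynomial in [A], the intertwining relations
   [A^T J = J A] and [A hess H0 = hess H0 A^T] pass to [B^T J = J B] and
   [B hess H0 = hess H0 B^T], so [B^T] commutes with [f0' = J hess H0].
   Then [g' = B^T f0'], [g = B^T f0], and the involution [B^T] cancels in
   [g' g] and [g' g']. *)
From HB Require Import structures.
From mathcomp Require Import all_boot all_order all_algebra.
Import Order.TTheory GRing.Theory Num.Theory.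
Set Implicit Arguments.
Unset Strict Implicit.
Unset Printing Implicit Defensive.

Local Open Scope ring_scope.

Section QuadraticMatrixPolynomial.
Variables (R : comPzRingType) (n : nat) (a b c : R).

Definition quad_mx (M : 'M[R]_n) : 'M[R]_n := a%:M + b *: M + c *: (M *m M).

Lemma trmx_quad_mx (M : 'M[R]_n) : (quad_mx M)^T = quad_mx M^T.
Proof. by rewrite /quad_mx !linearD /= !linearZ /= trmx_mul tr_scalar_mx. Qed.

Lemma quad_mx_intertwine (P Q X : 'M[R]_n) :
  P *m X = X *m Q -> quad_mx P *m X = X *m quad_mx Q.
Proof.
move=> PX; rewrite /quad_mx !mulmxDl !mulmxDr -!scalemxAl -!scalemxAr.
by rewrite mul_scalar_mx mul_mx_scalar -!mulmxA PX !mulmxA PX.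
Qed.

End QuadraticMatrixPolynomial.

Lemma mulmx_commuting_involution (R : pzRingType) (n m : nat)
    (P K : 'M[R]_n) (v : 'M[R]_(n, m)) :
  P *m P = 1%:M -> K *m P = P *m K -> (P *m K) *m (P *m v) = K *m v.
Proof. by move=> PP KP; rewrite -mulmxA (mulmxA K) KP !mulmxA PP mul1mx. Qed.

Section QuadraticFields.
Variable R : realFieldType.

Lemma qjac_qmap (M : 'M[R]_6) (q : qfield R) x :
  qjac (qmap M q) x = M *m qjac q x.
Proof.
apply/matrixP=> l m; rewrite !mxE.
under eq_bigr => k _ do rewrite /qmap -big_split /= big_distrl /=.
rewrite exchange_big /=; apply: eq_bigr => i _; rewrite !mxE big_distrr /=.
by apply: eq_bigr => k _; rewrite mulrA mulrDr.
Qed.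

Lemma qeval_qmap (M : 'M[R]_6) (q : qfield R) x :
  qeval (qmap M q) x = M *m qeval q x.
Proof.
apply/matrixP=> l m; rewrite !mxE.
under eq_bigr => j _ do under eq_bigr => k _ do rewrite /qmap !big_distrl /=.
under eq_bigr => j _ do rewrite exchange_big /=.
rewrite exchange_big /=; apply: eq_bigr => i _; rewrite !mxE big_distrr /=.
apply: eq_bigr => j _; rewrite big_distrr /=.
by apply: eq_bigr => k _; rewrite !mulrA.
Qed.

Lemma qjac_ham_field (H : cubic R) x : qjac (ham_field H) x = Jmat R *m hess H x.
Proof. exact: qjac_qmap. Qed.

End QuadraticFields.

Theorem mainTheorem4 (R : realFieldType) (A : 'M[R]_6) (H0 H1 H2 : cubic R)
  (alpha beta gamma : R) :
  skew_hamiltonian A ->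
  (forall x : 'cV[R]_6, A *m hess H0 x = hess H0 x *m A^T) ->
  (forall x : 'cV[R]_6, grad H1 x = A *m grad H0 x) ->
  (forall x : 'cV[R]_6, grad H2 x = A *m grad H1 x) ->
  let B : 'M[R]_6 := alpha%:M + beta *: A + gamma *: (A *m A) in
  B *m B = 1%:M ->
  let f0 := ham_field H0 in
  let g := qmap B^T f0 in
  forall x : 'cV[R]_6,
    qjac g x *m qeval g x = qjac f0 x *m qeval f0 x /\
    qjac g x *m qjac g x = qjac f0 x *m qjac f0 x.
Proof.
move=> hamA hessA _ _ B BB f0 g x.
have trB : B^T = quad_mx alpha beta gamma A^T by rewrite trmx_quad_mx.
have BtJ : B^T *m Jmat R = Jmat R *m B by rewrite trB; exact: quad_mx_intertwine.
have BH : B *m hess H0 x = hess H0 x *m B^T by rewrite trB; exact: quad_mx_intertwine.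
have BtBt : B^T *m B^T = 1%:M by rewrite -trmx_mul BB tr_scalar_mx.
have f0'_Bt : qjac f0 x *m B^T = B^T *m qjac f0 x.
  by rewrite qjac_ham_field -mulmxA -BH mulmxA -BtJ mulmxA.
rewrite /g qjac_qmap qeval_qmap.
by split; apply: mulmx_commuting_involution.
Qed.
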